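(* Let $\mathcal{I}\in\mathbb{R}^{H\times W\times U}$ be a hyperspectral image and let $\mathcal{D}_{\mathcal{I}}=\{(B_i,y_i)\}_{i=1}^{M}$ be the dataset of cuboids built from it, where $B_i\in\mathbb{R}^{P\times P\times U}$ is the cuboid centred at the $i$-th pixel and $y_i\in\mathcal{Y}=\{1,\dots,K\}$ is the label of that central pixel. Suppose $\mathcal{D}_{\mathcal{I}}$ is partitioned into $\mathcal{D}_{\text{train}}$, $\mathcal{D}_{\text{val}}$, and a set $\mathcal{D}_{\text{cal}}\cup\mathcal{D}_{\text{test}}$, where the split of $\mathcal{D}_{\text{cal}}\cup\mathcal{D}_{\text{test}}$ into the calibration set $\mathcal{D}_{\text{cal}}=\{(B_i,y_i)\}_{i=1}^n$ and the test set $\mathcal{D}_{\text{test}}=\{(B_{n+j},y_{n+j})\}_{j=1}^m$ is made uniformly at random. Let $S:(B,y)\mapsto S(B,y)\in\mathbb{R}$ be a non-conformity score function derived from a pre-trained HSI classifier (which may have been trained with access to the whole image, including pixels of calibration and test cuboids), and assume that for every cuboid $B$ and every label $y\in\mathcal{Y}$, the value $S(B,y)$ is invariant under any permutation of the union $\mathcal{D}_{\text{cal}}\cup\mathcal{D}_{\text{test}}$ (i.e., it does not depend on which elements of this union are designated as calibration versus test samples). Define $s_i:=S(B_i,y_i)$ for $i=1,\dots,n+m$. Then the calibration scores $\{s_i\}_{i=1}^n$ and the test scores $\{s_{n+j}\}_{j=1}^m$ are exchangeable.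
   Context: A non-conformity score function $S(B,y)$ measures how poorly label $y$ conforms to the classifier's prediction at cuboid $B$ (e.g., computed from the classifier's softmax probabilities $\hat\pi_\theta(B)$ and label ranks). A finite sequence of random variables is exchangeable if its joint distribution is invariant under every permutation of the indices. *)

From HB Require Import structures.
From mathcomp Require Import all_boot all_order all_algebra all_fingroup.
From mathcomp Require Import reals.
Set Implicit Arguments. Unset Strict Implicit. Unset Printing Implicit Defensive.
Import Order.TTheory GRing.Theory Num.Theory.
Local Open Scope ring_scope.

Definition cuboid (R : realType) (P U : nat) := {ffun 'I_P * 'I_P * 'I_U -> R}.

(* The random split of D_cal \cup D_test (N = n + m elements, indexed by 'I_N)
   is a uniformly random permutation sigma : position i of the split sequence
   receives element sigma i of the union; positions < n form D_cal, the others
   D_test. *)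
Definition prob_unif (R : realType) (N : nat) (E : pred {perm 'I_N}) : R :=
  #|[set s : {perm 'I_N} | E s]|%:R / (N`!)%:R.

Definition exchangeable (R : realType) (N : nat)
  (X : {perm 'I_N} -> 'I_N -> R) : Prop :=
  forall (pi : {perm 'I_N}) (A : ('I_N -> R) -> bool),
    @prob_unif R N (fun s => A (fun i => X s (pi i))) =
    @prob_unif R N (fun s => A (X s)).

From HB Require Import structures.
From mathcomp Require Import all_boot all_order all_algebra all_fingroup.
From mathcomp Require Import reals.
From mathcomp Require Import boolp.
Local Open Scope ring_scope.

(* The uniform law on permutations is invariant under left translation, and
   relabelling the coordinates of the sample (F (s 1), ..., F (s N)) by pi is
   the same as replacing s by the translate pi * s (which applies pi first:
   (pi * s) i = s (pi i)).  Under the invariance hypothesis the score vector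
   is such a sample, F j being the score of the j-th element of the
   calibration/test union. *)

Lemma card_perm_mull (N : nat) (pi : {perm 'I_N}) (E : pred {perm 'I_N}) :
  #|[set s : {perm 'I_N} | E (pi * s)%g]| = #|[set s : {perm 'I_N} | E s]|.
Proof.
have -> : [set s | E s] = [set (pi * t)%g | t in [set s | E (pi * s)%g]].
  apply/setP => s; rewrite inE; apply/idP/imsetP => [Es | [t + ->]].
    by exists (pi^-1 * s)%g; rewrite ?inE mulgA mulgV mul1g.
  by rewrite inE.
by rewrite card_imset //; apply: mulgI.
Qed.

Lemma prob_unif_mull (R : realType) (N : nat) (pi : {perm 'I_N})
    (E : pred {perm 'I_N}) :
  @prob_unif R N (fun s => E (pi * s)%g) = @prob_unif R N E.
Proof. by rewrite /prob_unif card_perm_mull. Qed.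

Lemma exchangeable_perm_sample (R : realType) (N : nat) (F : 'I_N -> R) :
  @exchangeable R N (fun s i => F (s i)).
Proof.
move=> pi A; rewrite -[RHS](@prob_unif_mull R N pi); congr (@prob_unif R N _).
apply: funext => s; congr (A _).
by apply: funext => i; rewrite permM.
Qed.

Theorem theorem2 (R : realType) (P U K n m : nat)
  (data : 'I_(n + m) -> cuboid R P U * 'I_K)
  (S : {perm 'I_(n + m)} -> cuboid R P U -> 'I_K -> R)
  (HS : forall (s t : {perm 'I_(n + m)}) (B : cuboid R P U) (y : 'I_K),
          S s B y = S t B y) :
  @exchangeable R (n + m) (fun (s : {perm 'I_(n + m)}) (i : 'I_(n + m)) =>
                    S s (data (s i)).1 (data (s i)).2).
Proof.
pose score j := S 1%g (data j).1 (data j).2.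
have -> : (fun s i => S s (data (s i)).1 (data (s i)).2) = (fun s i => score (s i)).
  by apply: funext => s; apply: funext => i; apply: HS.
exact: exchangeable_perm_sample.
Qed.
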